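(* Let $H$ be an SR-monoid. Then: (a) $1s\Rightarrow 0s$, $2s\Rightarrow 0s$, $3s\Rightarrow 0s$, $2s\Rightarrow 1s$, $2s\Rightarrow 3s$, $2s\Rightarrow 5s$, $3s\Rightarrow 6s$, $5s\Rightarrow 4s$, $4s\Rightarrow 4's$, $5s\Rightarrow 5's$; (b) $kr\Leftrightarrow ks$ for each $k\in\{0,1,2,3,4,4',5,5',6\}$.
   Context: A monoid means a commutative cancellative monoid (written multiplicatively); $H^{\ast}$ is its unit group, $\mathbb{N}=\{1,2,\dots\}$, $\mathbb{N}_0=\{0,1,2,\dots\}$. Elements are relatively prime ($a\perp b$) if all their common divisors are units. $\mathrm{Sqf}\,H$: elements not of the form $b^2c$ with $b\notin H^{\ast}$. $\mathrm{Gpr}\,H$: elements $r$ such that $r\mid b^n$ ($n\in\mathbb{N}$) implies $r\mid b$. $H$ is an SR-monoid if $\mathrm{Gpr}\,H=\mathrm{Sqf}\,H$. Let $S$ stand for $\mathrm{Sqf}\,H$ (suffix s) or $\mathrm{Gpr}\,H$ (suffix r). For every $a\in H$: (0) there are $n\in\mathbb{N}$, $s_1,\dots,s_n\in S$ with $a=s_1\cdots s_n$; (1) there are $n\in\mathbb{N}$, $s_1,\dots,s_n\in S$ with $s_i\perp s_j$ for $i\ne j$ and $a=s_1s_2^2\cdots s_n^n$; (2) there are $n\in\mathbb{N}$, $s_1,\dots,s_n\in S$ with $s_i\mid s_{i+1}$ ($i<n$) and $a=s_1\cdots s_n$; (3) there are $n\in\mathbb{N}_0$, $s_0,\dots,s_n\in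 S$ with $a=s_0s_1^2s_2^{2^2}\cdots s_n^{2^n}$; (4) there are $b\in H$, $c\in S$ with $b\perp c$, $a=bc$, and some $d\in S$ with $d^2\mid b$ and $b\mid d^n$ for some $n\in\mathbb{N}$; (4') there are $b\in H$, $c\in S$ with $b\perp c$, $a=bc$, and for every $d\in S$, $d\mid b$ implies $d^2\mid b$; (5) there are $b\in H$, $c\in S$ with $a=bc$ and $a\mid c^n$ for some $n\in\mathbb{N}$; (5') there are $b\in H$, $c\in S$ with $a=bc$ and for every $d\in S$, $d\mid a$ implies $d\mid c$; (6) there are $b\in H$, $c\in S$ with $a=b^2c$. Condition $ks$ (resp. $kr$) is $(k)$ with $S=\mathrm{Sqf}\,H$ (resp. $S=\mathrm{Gpr}\,H$). *)

From Stdlib Require Import Arith.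

Record CCMonoid := {
  carrier :> Type;
  mmul : carrier -> carrier -> carrier;
  mone : carrier;
  mmulA : forall x y z, mmul x (mmul y z) = mmul (mmul x y) z;
  mmulC : forall x y, mmul x y = mmul y x;
  mmul1 : forall x, mmul mone x = x;
  mcancel : forall x y z, mmul x y = mmul x z -> y = z
}.

Arguments mmul {c}.
Arguments mone {c}.

Section Defs.
Variable H : CCMonoid.

Local Notation "x * y" := (mmul x y).
Local Notation "1" := (@mone H).

Definition is_unit (x : H) : Prop := exists y, x * y = 1.

Definition mdvd (a b : H) : Prop := exists c, b = a * c.

Fixpoint mpow (x : H) (k : nat) : H :=
  match k with 0 => 1 | S k => mpow x k * x end.

Fixpoint mprod (s : nat -> H) (n : nat) : H :=
  match n with 0 => 1 | S n => mprod s n * s n end.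

Definition rel_prime (a b : H) : Prop :=
  forall d, mdvd d a -> mdvd d b -> is_unit d.

Definition Sqf (a : H) : Prop :=
  ~ exists b c, ~ is_unit b /\ a = mpow b 2 * c.

Definition Gpr (r : H) : Prop :=
  forall b n, 1 <= n -> mdvd r (mpow b n) -> mdvd r b.

Definition SR_monoid : Prop := forall a, Gpr a <-> Sqf a.

Definition cond0 (P : H -> Prop) : Prop :=
  forall a, exists n (s : nat -> H), 1 <= n /\ (forall i, i < n -> P (s i))
    /\ a = mprod s n.

(* s indexed 0..n-1 stands for s_1..s_n; exponent of s i is i+1 *)
Definition cond1 (P : H -> Prop) : Prop :=
  forall a, exists n (s : nat -> H), 1 <= n /\ (forall i, i < n -> P (s i))
    /\ (forall i j, i < n -> j < n -> i <> j -> rel_prime (s i) (s j))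
    /\ a = mprod (fun i => mpow (s i) (i + 1)) n.

Definition cond2 (P : H -> Prop) : Prop :=
  forall a, exists n (s : nat -> H), 1 <= n /\ (forall i, i < n -> P (s i))
    /\ (forall i, i + 1 < n -> mdvd (s i) (s (i + 1)))
    /\ a = mprod s n.

Definition cond3 (P : H -> Prop) : Prop :=
  forall a, exists n (s : nat -> H), (forall i, i <= n -> P (s i))
    /\ a = mprod (fun i => mpow (s i) (2 ^ i)) (n + 1).

Definition cond4 (P : H -> Prop) : Prop :=
  forall a, exists b c, P c /\ rel_prime b c /\ a = b * c /\
    exists d, P d /\ mdvd (mpow d 2) b /\ exists n, 1 <= n /\ mdvd b (mpow d n).

Definition cond4' (P : H -> Prop) : Prop :=
  forall a, exists b c, P c /\ rel_prime b c /\ a = b * c /\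
    forall d, P d -> mdvd d b -> mdvd (mpow d 2) b.

Definition cond5 (P : H -> Prop) : Prop :=
  forall a, exists b c, P c /\ a = b * c /\
    exists n, 1 <= n /\ mdvd a (mpow c n).

Definition cond5' (P : H -> Prop) : Prop :=
  forall a, exists b c, P c /\ a = b * c /\
    forall d, P d -> mdvd d a -> mdvd d c.

Definition cond6 (P : H -> Prop) : Prop :=
  forall a, exists b c, P c /\ a = mpow b 2 * c.

End Defs.

Inductive CondIdx := K0 | K1 | K2 | K3 | K4 | K4' | K5 | K5' | K6.

Definition cond (H : CCMonoid) (k : CondIdx) (P : H -> Prop) : Prop :=
  match k with
  | K0 => cond0 H P | K1 => cond1 H P | K2 => cond2 H P | K3 => cond3 H P
  | K4 => cond4 H P | K4' => cond4' H P | K5 => cond5 H P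
  | K5' => cond5' H P | K6 => cond6 H P
  end.

(* A chain s_0 | s_1 | ... | s_m of square-free elements is rewritten through its successive
   quotients t_0 = s_m / s_(m-1), ..., t_(m-1) = s_1 / s_0, t_m = s_0 as
   s_0 * ... * s_m = t_0 * t_1^2 * ... * t_m^(m+1), where t_0 * ... * t_m = s_m.
   Since s_m is square-free, the t_i are square-free and pairwise coprime, which is (1);
   c = t_0 * ... * t_m gives (5), and expanding the exponents i+1 in base 2 gives (3).
   The SR property enters only through "square-free implies g-primary", which lets a
   square-free divisor of a, with a | c^n, be moved to a divisor of c: this gives the
   implications out of (4) and (5). *)
From Stdlib Require Import Arith Lia Classical FunctionalExtensionality PropExtensionality.

#[local] Arguments mmulA {c}.
#[local] Arguments mmulC {c}.
#[local] Arguments mmul1 {c}.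
#[local] Arguments is_unit {H}.
#[local] Arguments mdvd {H}.
#[local] Arguments mpow {H}.
#[local] Arguments mprod {H}.
#[local] Arguments rel_prime {H}.

Section CCMonoidTheory.

Variable H : CCMonoid.
Local Infix "*" := (@mmul H).
Local Notation "1" := (@mone H).

Lemma mmul_1_r (x : H) : x * 1 = x.
Proof. rewrite mmulC. apply mmul1. Qed.

Lemma mmul_shuffle1 (a b c d : H) : a * b * (c * d) = a * c * (b * d).
Proof. rewrite <- !mmulA. f_equal. rewrite !mmulA. f_equal. apply mmulC. Qed.

Lemma mpow_1_r (x : H) : mpow x 1 = x.
Proof. apply mmul1. Qed.

Lemma mpow_1_l k : mpow 1 k = 1.
Proof. induction k as [|k IHk]; simpl; [reflexivity|]. rewrite IHk. apply mmul1. Qed.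

Lemma mpow_add_r (x : H) a b : mpow x (a + b) = mpow x a * mpow x b.
Proof.
  induction b as [|b IHb]; simpl.
  - rewrite Nat.add_0_r, mmul_1_r. reflexivity.
  - rewrite Nat.add_succ_r. simpl. rewrite IHb, mmulA. reflexivity.
Qed.

Lemma mpow_mul_r (x : H) a b : mpow x (a * b)%nat = mpow (mpow x a) b.
Proof.
  induction b as [|b IHb].
  - rewrite Nat.mul_0_r. reflexivity.
  - rewrite Nat.mul_succ_r, mpow_add_r, IHb. reflexivity.
Qed.

Lemma mpow_mul_l (x y : H) k : mpow (x * y) k = mpow x k * mpow y k.
Proof.
  induction k as [|k IHk]; simpl.
  - rewrite mmul1. reflexivity.
  - rewrite IHk. apply mmul_shuffle1.
Qed.

Lemma mprod_ext (f g : nat -> H) n :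
  (forall i, i < n -> f i = g i) -> mprod f n = mprod g n.
Proof.
  induction n as [|n IHn]; intros Efg; simpl; [reflexivity|].
  rewrite IHn, Efg; [reflexivity | lia | intros; apply Efg; lia].
Qed.

Lemma mprod_mul (f g : nat -> H) n :
  mprod (fun i => f i * g i) n = mprod f n * mprod g n.
Proof.
  induction n as [|n IHn]; simpl.
  - rewrite mmul1. reflexivity.
  - rewrite IHn. apply mmul_shuffle1.
Qed.

Lemma mprod_const (x : H) n : mprod (fun _ => x) n = mpow x n.
Proof. induction n as [|n IHn]; simpl; [reflexivity|]. rewrite IHn. reflexivity. Qed.

Lemma mprod_pow (f : nat -> H) k n :
  mprod (fun i => mpow (f i) k) n = mpow (mprod f n) k.
Proof.
  induction n as [|n IHn]; simpl.
  - rewrite mpow_1_l. reflexivity.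
  - rewrite IHn, mpow_mul_l. reflexivity.
Qed.

Lemma mprod_succ_l (f : nat -> H) n :
  mprod f (S n) = f 0 * mprod (fun i => f (S i)) n.
Proof.
  induction n as [|n IHn].
  - simpl. rewrite mmul1, mmul_1_r. reflexivity.
  - change (mprod f (S (S n))) with (mprod f (S n) * f (S n)).
    rewrite IHn. simpl. rewrite mmulA. reflexivity.
Qed.

Lemma mdvd_refl (x : H) : mdvd x x.
Proof. exists 1. rewrite mmul_1_r. reflexivity. Qed.

Lemma mdvd_trans (x y z : H) : mdvd x y -> mdvd y z -> mdvd x z.
Proof. intros [a ->] [b ->]. exists (a * b). apply eq_sym, mmulA. Qed.

Lemma mdvd_1_l (x : H) : mdvd 1 x.
Proof. exists x. rewrite mmul1. reflexivity. Qed.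

Lemma mdvd_factor_l (x y : H) : mdvd x (x * y).
Proof. exists y. reflexivity. Qed.

Lemma mdvd_factor_r (x y : H) : mdvd y (x * y).
Proof. exists x. apply mmulC. Qed.

Lemma mdvd_mul_compat (a b c d : H) : mdvd a b -> mdvd c d -> mdvd (a * c) (b * d).
Proof. intros [x ->] [y ->]. exists (x * y). apply mmul_shuffle1. Qed.

Lemma mdvd_pow_le (x : H) k m : k <= m -> mdvd (mpow x k) (mpow x m).
Proof.
  intros Hkm. exists (mpow x (m - k)). rewrite <- mpow_add_r. f_equal. lia.
Qed.

Lemma mdvd_mprod (f g : nat -> H) n :
  (forall i, i < n -> mdvd (f i) (g i)) -> mdvd (mprod f n) (mprod g n).
Proof.
  induction n as [|n IHn]; intros Dfg; simpl; [apply mdvd_refl|].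
  apply mdvd_mul_compat; [apply IHn; intros | ]; apply Dfg; lia.
Qed.

Lemma mdvd_mprod_term (f : nat -> H) n i : i < n -> mdvd (f i) (mprod f n).
Proof.
  induction n as [|n IHn]; intros Hi; [lia|]. simpl.
  destruct (Nat.eq_dec i n) as [->|Hin].
  - apply mdvd_factor_r.
  - eapply mdvd_trans; [apply IHn; lia | apply mdvd_factor_l].
Qed.

Lemma mdvd_mprod_two_terms (f : nat -> H) n i j :
  i < n -> j < n -> i <> j -> mdvd (f i * f j) (mprod f n).
Proof.
  induction n as [|n IHn]; intros Hi Hj Hij; [lia|]. simpl.
  destruct (Nat.eq_dec i n) as [->|Hin]; destruct (Nat.eq_dec j n) as [->|Hjn].
  - lia.
  - rewrite mmulC. apply mdvd_mul_compat; [apply mdvd_mprod_term; lia | apply mdvd_refl].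
  - apply mdvd_mul_compat; [apply mdvd_mprod_term; lia | apply mdvd_refl].
  - eapply mdvd_trans; [apply IHn; lia | apply mdvd_factor_l].
Qed.

Lemma Sqf_1 : Sqf H 1.
Proof.
  intros [b [c [Hb E]]]. apply Hb. exists (b * c).
  simpl in E. rewrite mmul1 in E. rewrite E, mmulA. reflexivity.
Qed.

Lemma Sqf_dvd (x y : H) : Sqf H y -> mdvd x y -> Sqf H x.
Proof.
  intros Sy [k ->] [b [c [Hb E]]]. apply Sy. exists b, (c * k).
  split; [exact Hb|]. rewrite E, mmulA. reflexivity.
Qed.

Lemma Sqf_square_dvd (y b : H) : Sqf H y -> mdvd (mpow b 2) y -> is_unit b.
Proof. intros Sy [c E]. apply NNPP. intros Hb. apply Sy. exists b, c. auto. Qed.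

Lemma Sqf_rel_prime (y u v : H) : Sqf H y -> mdvd (u * v) y -> rel_prime u v.
Proof.
  intros Sy Duv d Du Dv. apply (Sqf_square_dvd y d Sy).
  eapply mdvd_trans; [|exact Duv]. simpl. rewrite mmul1. apply mdvd_mul_compat; assumption.
Qed.

Inductive prod_of (P : H -> Prop) : H -> Prop :=
  | prod_of_1 : prod_of P 1
  | prod_of_mul x p : prod_of P x -> P p -> prod_of P (x * p).

Lemma prod_of_mul_closed (P : H -> Prop) x y :
  prod_of P x -> prod_of P y -> prod_of P (x * y).
Proof.
  intros Px Py. induction Py as [|y p _ IHy Pp].
  - rewrite mmul_1_r. exact Px.
  - rewrite mmulA. apply prod_of_mul; assumption.
Qed.

Lemma prod_of_pow (P : H -> Prop) x k : P x -> prod_of P (mpow x k).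
Proof.
  intros Px. induction k as [|k IHk]; simpl; [constructor|].
  apply prod_of_mul; assumption.
Qed.

Lemma prod_of_mprod (P : H -> Prop) (f : nat -> H) n :
  (forall i, i < n -> prod_of P (f i)) -> prod_of P (mprod f n).
Proof.
  induction n as [|n IHn]; intros Pf; simpl; [constructor|].
  apply prod_of_mul_closed; [apply IHn; intros |]; apply Pf; lia.
Qed.

Lemma cond0_of_prod_of (P : H -> Prop) : P 1 -> (forall a, prod_of P a) -> cond0 H P.
Proof.
  intros P1 Pa a. induction (Pa a) as [|x p _ [n [s [Hn [Ps ->]]]] Pp].
  - exists 1%nat, (fun _ => 1). repeat split; auto. simpl. rewrite mmul1. reflexivity.
  - exists (S n), (fun i => if i <? n then s i else p). split; [lia|]. split.
    + intros i Hi. destruct (Nat.ltb_spec i n); [apply Ps; lia | exact Pp].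
    + simpl. rewrite Nat.ltb_irrefl. f_equal. apply mprod_ext.
      intros i Hi. destruct (Nat.ltb_spec i n); [reflexivity | lia].
Qed.

(* The new first factor is the quotient s_(m+1) / s_m; the old factors move one step up
   in the exponent, which contributes the extra factor t_0 * ... * t_m = s_m. *)
Lemma chain_mprod_as_powers (s : nat -> H) m :
  (forall i, i < m -> mdvd (s i) (s (S i))) ->
  exists t, mprod t (S m) = s m /\
    mprod s (S m) = mprod (fun i => mpow (t i) (i + 1)) (S m).
Proof.
  induction m as [|m IHm]; intros Chain.
  - exists s. simpl. rewrite !mmul1. split; reflexivity.
  - destruct IHm as [t [Et Es]]; [intros; apply Chain; lia|].
    destruct (Chain m ltac:(lia)) as [q Eq].
    exists (fun i => match i with 0 => q | S j => t j end). split.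
    + rewrite mprod_succ_l. change (q * mprod t (S m) = s (S m)).
      rewrite Et, Eq. apply mmulC.
    + rewrite (mprod_succ_l (fun i => mpow _ (i + 1))).
      change (mprod s (S m) * s (S m) =
              mpow q 1 * mprod (fun i => mpow (t i) (i + 1) * t i) (S m)).
      rewrite mpow_1_r, mprod_mul, <- Es, Et, Eq, mmulA, mmulC. reflexivity.
Qed.

Lemma cond2_powers (P : H -> Prop) : cond2 H P -> forall a,
  exists m (t : nat -> H), P (mprod t (S m)) /\ a = mprod (fun i => mpow (t i) (i + 1)) (S m).
Proof.
  intros C2 a. destruct (C2 a) as [[|m] [s [Hn [Ps [Chain Ea]]]]]; [lia|].
  destruct (chain_mprod_as_powers s m) as [t [Et Es]].
  { intros i Hi. rewrite <- Nat.add_1_r. apply Chain. lia. }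
  exists m, t. split; [rewrite Et; apply Ps; lia | congruence].
Qed.

(* Induction on a bound for the exponents: split off the parity bits e_i mod 2 as the
   factor s_0 and expand the halved exponents e_i / 2. *)
Lemma mprod_pow_binary (t : nat -> H) n B : forall e : nat -> nat,
  (forall i, i < n -> e i <= B) ->
  exists N (s : nat -> H), (forall k, k <= N -> mdvd (s k) (mprod t n)) /\
    mprod (fun i => mpow (t i) (e i)) n = mprod (fun k => mpow (s k) (2 ^ k)) (N + 1).
Proof.
  induction B as [|B IHB]; intros e Be.
  - exists 0, (fun _ => 1). split; [intros; apply mdvd_1_l|].
    rewrite (mprod_ext _ (fun _ => 1)).
    + rewrite mprod_const, mpow_1_l. simpl. rewrite !mmul1. reflexivity.
    + intros i Hi. specialize (Be i Hi). replace (e i) with 0 by lia. reflexivity.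
  - destruct (IHB (fun i => e i / 2)) as [N [s [Ds Es]]].
    { intros i Hi. specialize (Be i Hi).
      pose proof (Nat.div_mod_eq (e i) 2). pose proof (Nat.mod_upper_bound (e i) 2). lia. }
    set (bits := mprod (fun i => mpow (t i) (e i mod 2)) n).
    exists (N + 1), (fun k => match k with 0 => bits | S k => s k end). split.
    + intros [|k] Hk.
      * apply mdvd_mprod. intros i _. rewrite <- (mpow_1_r (t i)) at 2.
        apply mdvd_pow_le. pose proof (Nat.mod_upper_bound (e i) 2). lia.
      * apply Ds. lia.
    + rewrite (mprod_ext _ (fun i => mpow (t i) (e i mod 2) * mpow (mpow (t i) (e i / 2)) 2)).
      2:{ intros i _. rewrite <- mpow_mul_r, <- mpow_add_r. f_equal.
          pose proof (Nat.div_mod_eq (e i) 2). lia. }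
      rewrite mprod_mul, mprod_pow, Es, <- mprod_pow.
      replace (N + 1 + 1) with (S (N + 1)) by lia.
      rewrite mprod_succ_l, mpow_1_r. f_equal.
      apply mprod_ext. intros k _. rewrite <- mpow_mul_r. f_equal. simpl. lia.
Qed.

Lemma cond2_cond0 (P : H -> Prop) : cond2 H P -> cond0 H P.
Proof.
  intros C2 a. destruct (C2 a) as [n [s [Hn [Ps [_ Ea]]]]]. exists n, s. auto.
Qed.

Lemma cond1_cond0 : cond1 H (Sqf H) -> cond0 H (Sqf H).
Proof.
  intros C1. apply cond0_of_prod_of; [exact Sqf_1|]. intros a.
  destruct (C1 a) as [n [s [_ [Ss [_ ->]]]]].
  apply prod_of_mprod. intros i Hi. apply prod_of_pow, Ss, Hi.
Qed.

Lemma cond3_cond0 : cond3 H (Sqf H) -> cond0 H (Sqf H).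
Proof.
  intros C3. apply cond0_of_prod_of; [exact Sqf_1|]. intros a.
  destruct (C3 a) as [n [s [Ss ->]]].
  apply prod_of_mprod. intros i Hi. apply prod_of_pow, Ss. lia.
Qed.

Lemma cond2_cond1 : cond2 H (Sqf H) -> cond1 H (Sqf H).
Proof.
  intros C2 a. destruct (cond2_powers _ C2 a) as [m [t [St Ea]]].
  exists (S m), t. split; [lia|]. split; [|split; [|exact Ea]].
  - intros i Hi. apply (Sqf_dvd _ _ St). apply mdvd_mprod_term, Hi.
  - intros i j Hi Hj Hij. apply (Sqf_rel_prime _ _ _ St). apply mdvd_mprod_two_terms; assumption.
Qed.

Lemma cond2_cond3 : cond2 H (Sqf H) -> cond3 H (Sqf H).
Proof.
  intros C2 a. destruct (cond2_powers _ C2 a) as [m [t [St Ea]]].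
  destruct (mprod_pow_binary t (S m) (S m) (fun i => i + 1)) as [N [s [Ds Es]]];
    [intros; lia|].
  exists N, s. split; [|congruence].
  intros k Hk. apply (Sqf_dvd _ _ St), Ds, Hk.
Qed.

Lemma cond2_cond5 : cond2 H (Sqf H) -> cond5 H (Sqf H).
Proof.
  intros C2 a. destruct (cond2_powers _ C2 a) as [m [t [St Ea]]].
  exists (mprod (fun i => mpow (t i) i) (S m)), (mprod t (S m)).
  split; [exact St|]. split.
  - rewrite Ea, <- mprod_mul. apply mprod_ext. intros i _. rewrite Nat.add_1_r. reflexivity.
  - exists (S m). split; [lia|]. rewrite Ea, <- mprod_pow. apply mdvd_mprod.
    intros i Hi. apply mdvd_pow_le. lia.
Qed.

Lemma cond3_cond6 (P : H -> Prop) : cond3 H P -> cond6 H P.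
Proof.
  intros C3 a. destruct (C3 a) as [n [s [Ps Ea]]].
  exists (mprod (fun i => mpow (s (S i)) (2 ^ i)) n), (s 0). split; [apply Ps; lia|].
  rewrite Ea, Nat.add_1_r, mprod_succ_l, mpow_1_r, mmulC, <- mprod_pow. f_equal.
  apply mprod_ext. intros i _. rewrite <- mpow_mul_r. f_equal. simpl. lia.
Qed.

Section GPrimary.

Variable P : H -> Prop.
Hypothesis P_Gpr : forall x, P x -> Gpr H x.

Lemma cond4_cond4' : cond4 H P -> cond4' H P.
Proof.
  intros C4 a. destruct (C4 a) as [b [c [Pc [Rbc [Ea [d [Pd [Dd2 [n [Hn Dn]]]]]]]]]].
  exists b, c. repeat split; [exact Pc | exact Rbc | exact Ea |].
  intros x Px Dx. destruct (P_Gpr x Px d n Hn (mdvd_trans _ _ _ Dx Dn)) as [y ->].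
  eapply mdvd_trans; [|exact Dd2]. rewrite mpow_mul_l. apply mdvd_factor_l.
Qed.

Lemma cond5_cond5' : cond5 H P -> cond5' H P.
Proof.
  intros C5 a. destruct (C5 a) as [b [c [Pc [Ea [n [Hn Dn]]]]]].
  exists b, c. repeat split; [exact Pc | exact Ea |].
  intros x Px Dx. apply (P_Gpr x Px c n Hn). eapply mdvd_trans; eassumption.
Qed.

End GPrimary.

(* Apply (5) to a = b c and then to b = b1 c1: c1 divides c, and a = (b c1) (c / c1). *)
Lemma cond5_cond4 : (forall x, Sqf H x -> Gpr H x) -> cond5 H (Sqf H) -> cond4 H (Sqf H).
Proof.
  intros Sqf_Gpr C5 a. destruct (C5 a) as [b [c [Sc [Ea [m [Hm Dm]]]]]].
  destruct (C5 b) as [b1 [c1 [Sc1 [Eb [k [Hk Dk]]]]]].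
  assert (Dc1 : mdvd c1 c).
  { apply (Sqf_Gpr c1 Sc1 c m Hm). eapply mdvd_trans; [|exact Dm].
    rewrite Ea, Eb. eapply mdvd_trans; [apply mdvd_factor_r | apply mdvd_factor_l]. }
  destruct Dc1 as [e Ec].
  assert (Dbc1 : mdvd (b * c1) (mpow c1 (S k))).
  { apply mdvd_mul_compat; [exact Dk | apply mdvd_refl]. }
  exists (b * c1), e. split; [|split; [|split]].
  - apply (Sqf_dvd _ _ Sc). rewrite Ec. apply mdvd_factor_r.
  - intros x Dx1 Dx2.
    assert (Sx : Sqf H x).
    { apply (Sqf_dvd _ _ Sc). eapply mdvd_trans; [exact Dx2|]. rewrite Ec. apply mdvd_factor_r. }
    assert (Dx : mdvd x c1).
    { apply (Sqf_Gpr x Sx c1 (S k)); [lia | exact (mdvd_trans _ _ _ Dx1 Dbc1)]. }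
    apply (Sqf_rel_prime c c1 e Sc); [rewrite Ec; apply mdvd_refl | exact Dx | exact Dx2].
  - rewrite Ea, Ec. apply mmulA.
  - exists c1. split; [exact Sc1|]. split.
    + simpl. rewrite mmul1. apply mdvd_mul_compat; [|apply mdvd_refl].
      rewrite Eb. apply mdvd_factor_r.
    + exists (S k). split; [lia | exact Dbc1].
Qed.

End CCMonoidTheory.

Lemma cond_ext (H : CCMonoid) k (P Q : H -> Prop) :
  (forall a, P a <-> Q a) -> cond H k P <-> cond H k Q.
Proof.
  intros PQ. replace Q with P; [reflexivity|].
  apply functional_extensionality. intros a. apply propositional_extensionality, PQ.
Qed.

Theorem proposition4p2 (H : CCMonoid) :
  SR_monoid H ->
  (* (a) *)
  ((cond H K1 (Sqf H) -> cond H K0 (Sqf H)) /\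
   (cond H K2 (Sqf H) -> cond H K0 (Sqf H)) /\
   (cond H K3 (Sqf H) -> cond H K0 (Sqf H)) /\
   (cond H K2 (Sqf H) -> cond H K1 (Sqf H)) /\
   (cond H K2 (Sqf H) -> cond H K3 (Sqf H)) /\
   (cond H K2 (Sqf H) -> cond H K5 (Sqf H)) /\
   (cond H K3 (Sqf H) -> cond H K6 (Sqf H)) /\
   (cond H K5 (Sqf H) -> cond H K4 (Sqf H)) /\
   (cond H K4 (Sqf H) -> cond H K4' (Sqf H)) /\
   (cond H K5 (Sqf H) -> cond H K5' (Sqf H)))
  /\
  (* (b) *)
  (forall k : CondIdx, cond H k (Gpr H) <-> cond H k (Sqf H)).
Proof.
  intros SR.
  assert (Sqf_Gpr : forall x, Sqf H x -> Gpr H x) by (intros x; apply SR).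
  split; [|intros k; apply cond_ext, SR].
  simpl. repeat split.
  - apply cond1_cond0.
  - apply cond2_cond0.
  - apply cond3_cond0.
  - apply cond2_cond1.
  - apply cond2_cond3.
  - apply cond2_cond5.
  - apply cond3_cond6.
  - apply cond5_cond4, Sqf_Gpr.
  - apply cond4_cond4', Sqf_Gpr.
  - apply cond5_cond5', Sqf_Gpr.
Qed.
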